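(* Let $\mathcal{L}$ be a square lattice, let $\beta$ be a maximal element of $J(\mathcal{L})$, and let $\alpha \in \mathcal{L}_\beta$. Then \[ |E_\alpha \setminus E_\alpha(\mathcal{L}_\beta)| = |E_\alpha| - |E_\alpha(\mathcal{L}_\beta)| \geq |\mathcal{L}| - |\mathcal{L}_\beta| - 1. \]
   Context: All lattices are finite distributive. $x \in \mathcal{L}$ is join-irreducible if $x = y\vee z$ implies $x=y$ or $x=z$ (so the minimum, the root, is join-irreducible); $J(\mathcal{L})$ is the poset of join-irreducibles. $\mathcal{L}$ is a tree lattice if the Hasse diagram of $J(\mathcal{L})$ is a tree; a square lattice is a tree lattice in which every vertex of this Hasse diagram other than the root has degree at most two. For a maximal $\beta \in J(\mathcal{L})$, the pruning $\mathcal{L}_\beta$ is the lattice of hereditary subsets of $J(\mathcal{L})\setminus\{\beta\}$, identified (via Birkhoff's theorem) with the sublattice $\{\gamma \in \mathcal{L} : \gamma \not\geq \beta\}$ of $\mathcal{L}$. A diamond in a lattice $\mathcal{M}$ is a set $\{x, y, x\vee y, x\wedge y\}$ with $x, y \in \mathcal{M}$ non-comparable. For $\alpha \in \mathcal{M}$, $E_\alpha(\mathcal{M}) = \{(\alpha,\gamma) : \text{some diamond of } \mathcal{M} \text{ contains both } \alpha \text{ and } \gamma\}$, and $E_\alpha = E_\alpha(\mathcal{L})$. *)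

From HB Require Import structures.
From mathcomp Require Import all_boot all_order all_algebra.
Set Implicit Arguments.
Unset Strict Implicit.
Unset Printing Implicit Defensive.
Import Order.TTheory.
Local Open Scope order_scope.

Section Defs.
Context {d : Order.disp_t} {T : finTBDistrLatticeType d}.

(* join-irreducible, as in the paper: x = y \/ z implies x = y or x = z
   (so the bottom element is join-irreducible) *)
Definition join_irr (x : T) : bool :=
  [forall y : T, forall z : T, (x == y `|` z) ==> ((x == y) || (x == z))].

Definition JL : {set T} := [set x | join_irr x].

Definition Jcovers (x y : T) : bool :=
  [&& x \in JL, y \in JL, x < y & [forall z : T, (z \in JL) ==> ~~ ((x < z) && (z < y))]].

Definition hasse_adj (x y : T) : bool := Jcovers x y || Jcovers y x.

Definition hasse_connected : Prop :=
  forall x y, x \in JL -> y \in JL -> connect hasse_adj x y.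

Definition hasse_acyclic : Prop :=
  forall c : seq T, uniq c -> (3 <= size c)%N -> ~~ cycle hasse_adj c.

Definition tree_lattice : Prop := hasse_connected /\ hasse_acyclic.

(* square lattice: tree lattice, every non-root vertex has degree <= 2;
   the root of J(L) is its minimum, the bottom of L *)
Definition square_lattice : Prop :=
  tree_lattice /\
  forall x, x \in JL -> x != \bot -> (#|[set y | hasse_adj x y]| <= 2)%N.

Definition maximal_J (b : T) : bool :=
  (b \in JL) && [forall y : T, (y \in JL) ==> (b <= y) ==> (y == b)].

Definition pruning (b : T) : {set T} := [set g | ~~ (b <= g)].

(* diamonds of a sublattice M (given as a subset of T closed under meet/join,
   so its lattice operations are those of T) *)
Definition diamond_of (x y : T) : {set T} := [set x; y; x `|` y; x `&` y].

Definition in_common_diamond (M : {set T}) (a g : T) : bool :=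
  [exists x : T, exists y : T,
     [&& x \in M, y \in M, ~~ (x >=< y),
         a \in diamond_of x y & g \in diamond_of x y]].

Definition Ealpha (M : {set T}) (a : T) : {set T * T} :=
  [set p : T * T | (p.1 == a) && in_common_diamond M a p.2].

End Defs.

(* In a square lattice a non-bottom join-irreducible k has a lower cover in
   J(L), so by the degree bound it has at most one upper cover; hence the
   join-irreducibles above k form a chain.  An atom of J(L) below both a maximal
   beta and a join-irreducible j not below beta would make j and beta comparable,
   so beta `&` j = \bot, and every g >= beta splits as beta `|` c with
   beta `&` c = \bot.  Each such g other than alpha `|` beta shares a diamond of L
   with alpha: either g and alpha are incomparable, or alpha `|` beta and
   alpha `|` c span a diamond with meet alpha and join g.  Diamonds of L_beta stay
   inside L_beta, which contains no such g, so these |L| - |L_beta| - 1 pairs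
   (alpha, g) lie in E_alpha but not in E_alpha(L_beta). *)

From HB Require Import structures.
From mathcomp Require Import all_boot all_order all_algebra.
From mathcomp Require Import zify.
Import Order.TTheory GRing.Theory Num.Theory.
Local Open Scope order_scope.

Lemma fin_lt_ind {d : Order.disp_t} {T : finPOrderType d} (P : T -> Prop) :
  (forall x, (forall y, y < x -> P y) -> P x) -> forall x, P x.
Proof.
move=> IH x; have [n] := ubnP #|[set y | y < x]|.
elim: n x => // n IHn x; rewrite ltnS => ltxn; apply: IH => y yx; apply: IHn.
apply: (leq_trans _ ltxn); apply: proper_card; apply/properP; split.
  by apply/subsetP => w; rewrite !inE => /lt_trans; apply.
by exists y; rewrite !inE ?ltxx.
Qed.

Lemma fin_gt_ind {d : Order.disp_t} {T : finPOrderType d} (P : T -> Prop) :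
  (forall x, (forall y, x < y -> P y) -> P x) -> forall x, P x.
Proof.
move=> IH; apply: (@fin_lt_ind _ T^d) => x IHx.
by apply: IH => y xy; apply: IHx; rewrite ltEdual.
Qed.

Section JoinIrreducibles.
Context {d : Order.disp_t} {T : finTBDistrLatticeType d}.
Implicit Types (a b g j k l u v x y : T).

Lemma JL0 : \bot \in JL (T := T).
Proof.
rewrite inE; apply/forallP => y; apply/forallP => z; apply/implyP => /eqP h.
by rewrite eq_sym -lex0 h leUl.
Qed.

Lemma notJL_join_lt x : x \notin JL -> exists y z, [/\ x = y `|` z, y < x & z < x].
Proof.
rewrite inE => /forallPn [y /forallPn [z]].
rewrite negb_imply negb_or => /and3P [/eqP -> nyx nzx].
by exists y, z; rewrite !lt_def leUl leUr !andbT; split; rewrite // eq_sym.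
Qed.

Lemma JL_le_join j x y : j \in JL -> j <= x `|` y -> (j <= x) || (j <= y).
Proof.
move=> jJ jxy; have ej : j = (j `&` x) `|` (j `&` y).
  by rewrite -meetUr; apply/esym/meet_idPl.
move: jJ; rewrite inE => /forallP/(_ (j `&` x))/forallP/(_ (j `&` y)).
by rewrite -ej eqxx => /orP [] /eqP ->; rewrite leIr ?orbT.
Qed.

Lemma le_of_JL_le x y : (forall j, j \in JL -> j <= x -> j <= y) -> x <= y.
Proof.
elim/(@fin_lt_ind _ T): x => x IH xy.
case: (boolP (x \in JL)) => [xJ | /notJL_join_lt].
  exact: xy xJ (lexx x).
move=> [u [v [ex ux vx]]]; rewrite ex leUx.
by apply/andP; split; [apply: (IH _ ux) | apply: (IH _ vx)] => j jJ jle;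
  apply: xy jJ _; apply: le_trans jle (ltW _).
Qed.

Lemma exists_nbot_JL_le x : x != \bot ->
  exists2 k, k \in JL & (k != \bot) && (k <= x).
Proof.
elim/(@fin_lt_ind _ T): x => x IH xn0.
case: (boolP (x \in JL)) => [xJ | /notJL_join_lt].
  by exists x; rewrite // xn0 lexx.
move=> [u [v [ex ux vx]]]; have [u0 | un0] := eqVneq u \bot.
  by move: vx; rewrite ex u0 join0x ltxx.
have [k kJ /andP [kn0 ku]] := IH u ux un0.
by exists k; rewrite // kn0 (le_trans ku) // ltW.
Qed.

Lemma Jcovers_le_of_lt a x : a \in JL -> x \in JL -> a < x ->
  exists2 c, Jcovers a c & c <= x.
Proof.
move=> aJ; elim/(@fin_lt_ind _ T): x => x IH xJ ax.
case: (boolP [forall z, (z \in JL) ==> ~~ ((a < z) && (z < x))]) => [noz | ].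
  by exists x; rewrite /Jcovers ?aJ ?xJ ?ax ?noz.
move=> /forallPn [z]; rewrite negb_imply negbK => /andP [zJ /andP [az zx]].
have [c ac cz] := IH z zx zJ az.
by exists c; rewrite // (le_trans cz) // ltW.
Qed.

Lemma Jcovers_of_gt l k : l \in JL -> k \in JL -> l < k -> exists c, Jcovers c k.
Proof.
move=> + kJ; elim/(@fin_gt_ind _ T): l => l IH lJ lk.
case: (boolP [forall z, (z \in JL) ==> ~~ ((l < z) && (z < k))]) => [noz | ].
  by exists l; rewrite /Jcovers lJ kJ lk noz.
move=> /forallPn [z]; rewrite negb_imply negbK => /andP [zJ /andP [lz zk]].
exact: IH lz zJ zk.
Qed.

Lemma in_common_diamond_setT x y u v : ~~ (x >=< y) ->
  u \in diamond_of x y -> v \in diamond_of x y -> in_common_diamond [set: T] u v.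
Proof.
move=> xy ud vd; apply/existsP; exists x; apply/existsP; exists y.
by rewrite !in_setT xy ud vd.
Qed.

Lemma diamond_of_pruning b x y : b \in JL -> x \in pruning b -> y \in pruning b ->
  diamond_of x y \subset pruning b.
Proof.
move=> bJ; rewrite !inE => xb yb; apply/subsetP => w; rewrite !inE.
case/orP => [/orP [/orP [] | ] | ] /eqP -> //.
  by apply/negP => /(JL_le_join _ _ _ bJ) /orP []; apply/negP.
by apply: contraNN xb => /le_trans; apply; apply: leIl.
Qed.

Lemma in_common_diamond_pruning b a g : b \in JL ->
  in_common_diamond (pruning b) a g -> g \in pruning b.
Proof.
move=> bJ /existsP [x /existsP [y /and5P [xb yb _ _ gxy]]].
exact: subsetP (diamond_of_pruning _ _ _ bJ xb yb) g gxy.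
Qed.

Lemma Ealpha_subset (M N : {set T}) a : M \subset N -> Ealpha M a \subset Ealpha N a.
Proof.
move=> MN; apply/subsetP => p; rewrite !inE => /andP [-> /existsP [x /existsP [y]]].
move=> /and5P [xM yM xy ad gd]; apply/existsP; exists x; apply/existsP; exists y.
by rewrite (subsetP MN) ?(subsetP MN y) ?xy ?ad ?gd.
Qed.

Section SquareLattice.
Hypothesis hasse_deg_le2 :
  forall x : T, x \in JL -> x != \bot -> (#|[set y | hasse_adj x y]| <= 2)%N.

Lemma Jcovers_up_uniq k a b : k \in JL -> k != \bot ->
  Jcovers k a -> Jcovers k b -> a = b.
Proof.
move=> kJ kn0 cka ckb; apply/eqP/negP => /negP ab.
have [l clk] : exists l, Jcovers l k.
  by apply: (Jcovers_of_gt _ _ JL0 kJ); rewrite lt0x.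
have [lk ka kb] : [/\ l < k, k < a & k < b].
  by case/and4P: clk => _ _ -> _; case/and4P: cka => _ _ -> _;
    case/and4P: ckb => _ _ -> _.
have labU : uniq [:: l; a; b].
  by rewrite /= !inE negb_or ab !lt_eqF ?(lt_trans lk).
have := hasse_deg_le2 _ kJ kn0; apply/negP; rewrite -ltnNge.
rewrite -[3]/(size [:: l; a; b]) -(card_uniqP labU).
apply: subset_leq_card; apply/subsetP => y; rewrite !inE /hasse_adj.
by case/or3P => /eqP ->; rewrite ?clk ?cka ?ckb ?orbT.
Qed.

Lemma JL_comparable_ge k x y : k \in JL -> k != \bot -> x \in JL -> y \in JL ->
  k <= x -> k <= y -> x >=< y.
Proof.
elim/(@fin_gt_ind _ T): k => k IH kJ kn0 xJ yJ kx ky.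
have [<- | xk] := eqVneq k x; first by rewrite /Order.comparable ky.
have [<- | yk] := eqVneq k y; first by rewrite /Order.comparable kx orbT.
have [c ckc cx] : exists2 c, Jcovers k c & c <= x.
  by apply: Jcovers_le_of_lt; rewrite // lt_neqAle xk.
have [c' ckc' c'y] : exists2 c, Jcovers k c & c <= y.
  by apply: Jcovers_le_of_lt; rewrite // lt_neqAle yk.
rewrite (Jcovers_up_uniq _ _ _ kJ kn0 ckc' ckc) in c'y.
have /and4P [_ cJ kc _] := ckc.
have cn0 : c != \bot by rewrite -lt0x (le_lt_trans (le0x k) kc).
exact: IH kc cJ cn0 xJ yJ cx c'y.
Qed.

Lemma maximal_J_meet_JL b j : maximal_J b -> j \in JL -> ~~ (j <= b) ->
  b `&` j = \bot.
Proof.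
move=> /andP [bJ /forallP bmax] jJ jb; apply/eqP/negPn/negP => /exists_nbot_JL_le.
move=> [k kJ /andP [kn0]]; rewrite lexI => /andP [kb kj].
have := JL_comparable_ge _ _ _ kJ kn0 bJ jJ kb kj.
rewrite /Order.comparable (negbTE jb) orbF => bj.
by move: (bmax j); rewrite jJ bj => /eqP ejb; rewrite ejb lexx in jb.
Qed.

Lemma maximal_J_complement b g : maximal_J b -> b <= g ->
  exists c, b `&` c = \bot /\ b `|` c = g.
Proof.
move=> bmax bg; pose c := \join_(j | [&& j \in JL, j <= g & ~~ (j <= b)]) j.
exists c; split.
  apply: (big_ind (fun x => b `&` x = \bot)); first by rewrite meetx0.
    by move=> x y bx0 by0; rewrite meetUr bx0 by0 joinx0.
  by move=> j /and3P [jJ _ jb]; apply: maximal_J_meet_JL.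
apply/le_anti; rewrite leUx bg /=; apply/andP; split.
  by apply/joinsP => j /and3P [].
apply: le_of_JL_le => j jJ jg; have [jb | jb] := boolP (j <= b).
  by rewrite lexU2 ?jb.
by rewrite lexU2 // (joins_sup (fun j => j)) ?orbT // jJ jg.
Qed.

Lemma in_common_diamond_above b a g : maximal_J b -> ~~ (b <= a) -> b <= g ->
  g != a `|` b -> in_common_diamond [set: T] a g.
Proof.
move=> bmax ba bg gab; have bJ : b \in JL by case/andP: bmax.
have [ag | nag] := boolP (a <= g); last first.
  apply: (in_common_diamond_setT a g); last 2 first.
  - by rewrite !inE eqxx.
  - by rewrite !inE eqxx !orbT.
  rewrite /Order.comparable negb_or nag /=.
  by apply: contraNN ba; apply: le_trans bg.
have [c [bc0 bcg]] := maximal_J_complement _ _ bmax bg.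
apply: (in_common_diamond_setT (a `|` b) (a `|` c)).
- rewrite /Order.comparable negb_or; apply/andP; split.
    apply: contraNN ba => /(le_trans (leUr _ _)) /(JL_le_join _ _ _ bJ).
    case/orP => // bc.
    by rewrite -(meet_idPl bc) bc0 le0x.
  apply: contraNN gab => /join_idPr <-.
  by rewrite joinACA joinxx [c `|` b]joinC bcg (join_idPr ag).
- by rewrite !inE -joinIr bc0 joinx0 eqxx !orbT.
- by rewrite !inE joinACA joinxx bcg (join_idPr ag) eqxx !orbT.
Qed.

Lemma card_Ealpha_pruning_diff b a : maximal_J b -> a \in pruning b ->
  (#|~: pruning b| <= #|Ealpha [set: T] a :\: Ealpha (pruning b) a|.+1)%N.
Proof.
move=> bmax; rewrite inE => ba; have bJ : b \in JL by case/andP: bmax.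
rewrite (cardsD1 (a `|` b)) -addn1 addnC leq_add ?leq_b1 //.
have pair_inj : injective (pair a : T -> T * T) by move=> x y [].
rewrite -(card_imset _ pair_inj).
apply/subset_leq_card/subsetP => _ /imsetP [g + ->].
rewrite !inE negbK /= eqxx /= => /andP [gab bg].
rewrite (in_common_diamond_above _ _ _ bmax ba bg gab) andbT.
by apply/negP => /(in_common_diamond_pruning _ _ _ bJ); rewrite inE bg.
Qed.

End SquareLattice.
End JoinIrreducibles.

Theorem mainTheorem9 (d : Order.disp_t) (T : finTBDistrLatticeType d)
    (beta alpha : T) :
  square_lattice (T := T) ->
  maximal_J beta ->
  alpha \in pruning beta ->
  let E := Ealpha [set: T] alpha in
  let Eb := Ealpha (pruning beta) alpha in
  ((#|E :\: Eb|%:Z = #|E|%:Z - #|Eb|%:Z)%R /\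
   (#|T|%:Z - #|pruning beta|%:Z - 1 <= #|E :\: Eb|%:Z)%R).
Proof.
move=> [_ hasse_deg_le2] bmax ab E Eb.
have EbE : Eb \subset E := Ealpha_subset _ _ _ (subsetT _).
split; first by rewrite cardsD (setIidPr EbE) subzn ?subset_leq_card.
have : (#|T| <= #|pruning beta| + #|E :\: Eb|.+1)%N.
  by rewrite -(cardsC (pruning beta)) leq_add2l card_Ealpha_pruning_diff.
lia.
Qed.
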